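(* Let $n\ge 2$ and sample $\mathbf C$ from the ensemble $\mathcal{R}_n$ described in the context. Then: (1) $\mathbf C$ is a symplectic matrix, i.e. $(\mathbf C\mathbf v)\odot(\mathbf C\mathbf w)=\mathbf v\odot\mathbf w$ for all $\mathbf v,\mathbf w\in\mathbb{Z}_2^{2n}$. (2) Let $\mathbf v_1,\dots,\mathbf v_{n-1}\in\mathbb{Z}_2^{2n}$ be a uniformly random basis of an $(n-1)$-dimensional isotropic subspace $V$, where $V$ is uniformly random subject to being symplectically orthogonal to $\mathbf f_1$ (sampled independently of $\mathbf C$), and let $\mathbf w_i:=\mathbf C\mathbf v_i$. Then the distribution of $(\mathbf w_1,\dots,\mathbf w_{n-1})$ is within total variation distance $\mathrm{negl}(n)$ of a uniformly random basis of a uniformly random $(n-1)$-dimensional isotropic subspace of $\mathbb{Z}_2^{2n}$.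
   Context: Symplectic inner product on $\mathbb{Z}_2^{2n}$: $(\mathbf a,\mathbf b)\odot(\mathbf a',\mathbf b')=\mathbf a\cdot\mathbf b'+\mathbf a'\cdot\mathbf b \pmod 2$ for $\mathbf a,\mathbf b,\mathbf a',\mathbf b'\in\mathbb{Z}_2^n$. A subspace is isotropic if every two of its vectors are symplectically orthogonal. The standard symplectic basis is $\mathbf e_1,\dots,\mathbf e_n,\mathbf f_1,\dots,\mathbf f_n$, where $\mathbf e_i$ has a single $1$ in position $i$ and $\mathbf f_i$ has a single $1$ in position $n+i$. The ensemble $\mathcal{R}_n$ (random symplectic hyperplane rotation): sample $\mathbf r\sim\mathbb{Z}_2^{2n}$ uniformly. Let $k$ be the smallest index $k\ge1$ with $r_{n+k}=1$; if no such index exists, output $\mathbf C=\mathbf I$. Otherwise let $\mathbf r'$ equal $\mathbf r$ with entries $n+1$ and $n+k$ swapped. Let $\mathbf C_0$ be the linear map with $\mathbf e_1\mapsto\mathbf e_1$, $\mathbf f_1\mapsto\mathbf r'$, $\mathbf e_j\mapsto\mathbf e_j+(\mathbf r'\odot\mathbf e_j)\mathbf e_1$ and $\mathbf f_j\mapsto\mathbf f_j+(\mathbf r'\odot\mathbf f_j)\mathbf e_1$ for $j=2,\dots,n$. Let $\mathbf\Pi$ be the matrix swapping $\mathbf e_1\leftrightarrow\mathbf e_k$ and $\mathbf f_1\leftrightarrow\mathbf f_k$ and fixing all other $\mathbf e_j,\mathbf f_j$. Output $\mathbf C:=\mathbf\Pi\mathbf C_0$ (so $\mathbf C\mathbf f_1=\mathbf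 r$). *)

(* Vectors of Z_2^{2n} are row vectors 'rV['F_2]_(n+n);
   coordinate (lshift n i) is the "a"-part entry i (position i+1 in the paper),
   coordinate (rshift n i) is the "b"-part entry i (position n+i+1). *)
From HB Require Import structures.
From mathcomp Require Import all_boot all_order all_algebra.
Set Implicit Arguments. Unset Strict Implicit. Unset Printing Implicit Defensive.
Import Order.TTheory GRing.Theory Num.Theory.
Local Open Scope ring_scope.

Notation vec n := 'rV['F_2]_(n + n).

Definition e_ {n} (i : 'I_n) : vec n := delta_mx 0 (lshift n i).
Definition f_ {n} (i : 'I_n) : vec n := delta_mx 0 (rshift n i).

Definition sympl {n} (u v : vec n) : 'F_2 :=
  \sum_(i < n) (u 0 (lshift n i) * v 0 (rshift n i) + v 0 (lshift n i) * u 0 (rshift n i)).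

Definition act {n} (C : 'M['F_2]_(n + n)) (v : vec n) : vec n := (C *m v^T)^T.

(* the index "1" (0-based 0) of 'I_n, built from any inhabitant *)
Definition ord0_of {n} (k : 'I_n) : 'I_n :=
  Ordinal (leq_ltn_trans (leq0n k) (ltn_ord k)).

Definition swapi {m} (a b j : 'I_m) : 'I_m :=
  if j == a then b else if j == b then a else j.

Definition first_k {n} (r : vec n) : option 'I_n :=
  [pick k : 'I_n | (r 0 (rshift n k) == 1) &&
     [forall j : 'I_n, (j < k)%N ==> (r 0 (rshift n j) == 0)]].

Definition mx_of_cols {n} (img : 'I_(n + n) -> vec n) : 'M['F_2]_(n + n) :=
  \matrix_(i, j) img j 0 i.

(* the ensemble R_n: C as a function of the sample r *)
Definition Cmat {n} (r : vec n) : 'M['F_2]_(n + n) :=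
  match first_k r with
  | None => 1%:M
  | Some k =>
      let z := ord0_of k in
      let r' : vec n := \row_j r 0 (swapi (rshift n z) (rshift n k) j) in
      let C0 := mx_of_cols (fun j =>
        if j == lshift n z then e_ z
        else if j == rshift n z then r'
        else delta_mx 0 j + sympl r' (delta_mx 0 j) *: e_ z) in
      let Pi := mx_of_cols (fun j =>
        delta_mx 0 (swapi (rshift n z) (rshift n k)
                      (swapi (lshift n z) (lshift n k) j))) in
      Pi *m C0
  end.

(* subspaces of Z_2^{2n} are represented by their sets of vectors *)
Definition span_set {m n} (B : 'M['F_2]_(m, n + n)) : {set vec n} :=
  [set v : vec n | (v <= B)%MS].

(* ordered bases of size n-1 of V (rows of the matrix = basis vectors) *)
Definition bases {n} (V : {set vec n}) : {set 'M['F_2]_(n.-1, n + n)} :=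
  [set B | row_free B && (span_set B == V)].

Definition isotropic {n} (V : {set vec n}) : bool :=
  [forall u in V, forall v in V, sympl u v == 0].

(* (n-1)-dimensional isotropic subspaces *)
Definition iso_subspaces n : {set {set vec n}} :=
  [set V : {set vec n} | (bases V != set0) && isotropic V].

Definition iso_subspaces_f1 n : {set {set vec n}} :=
  [set V in iso_subspaces n |
     [forall z : 'I_n, (val z == 0%N) ==> [forall v in V, sympl v (f_ z) == 0]]].

Definition act_rows {n} (C : 'M['F_2]_(n + n)) (B : 'M['F_2]_(n.-1, n + n))
  : 'M['F_2]_(n.-1, n + n) := \matrix_i act C (row i B).

Definition src_dist n (W : 'M['F_2]_(n.-1, n + n)) : rat :=
  \sum_(r : vec n) \sum_(V in iso_subspaces_f1 n) \sum_(B in bases V)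
    (act_rows (Cmat r) B == W)%:R /
    (#|{: vec n}|%:R * #|iso_subspaces_f1 n|%:R * #|bases V|%:R).

Definition tgt_dist n (W : 'M['F_2]_(n.-1, n + n)) : rat :=
  \sum_(V in iso_subspaces n) \sum_(B in bases V)
    (B == W)%:R / (#|iso_subspaces n|%:R * #|bases V|%:R).

Definition tv_dist {T : finType} (p q : T -> rat) : rat :=
  2^-1 * \sum_(x : T) `|p x - q x|.

Definition negligible (eps : nat -> rat) : Prop :=
  forall c : nat, exists N : nat, forall n : nat, (N <= n)%N ->
    eps n <= ((n%:R : rat) ^+ c)^-1.

From HB Require Import structures.
From mathcomp Require Import all_boot all_order all_algebra.
From mathcomp Require Import zify ring lra.
From mathcomp Require Import mxabelem.
Import Order.TTheory GRing.Theory Num.Theory.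
Local Open Scope ring_scope.
Set Implicit Arguments. Unset Strict Implicit. Unset Printing Implicit Defensive.

(* (1) C is the product of a matrix C_0, whose columns are checked pairwise to
   have the symplectic Gram matrix, and a permutation of the coordinate pairs
   (a_i, b_i); both are symplectic.
   (2) A symplectic C maps V, isotropic and orthogonal to f_1, onto an isotropic
   subspace orthogonal to C f_1, and as r runs over the samples with nonzero
   b-part, C f_1 runs bijectively over the same set.  The symplectic group is transitive on nonzero vectors,
   so every nonzero x is orthogonal to equally many (n-1)-dimensional isotropic
   subspaces, while each such subspace W is orthogonal to exactly 2^(n+1)
   vectors.  Hence, apart from the 2^n samples r with zero b-part, a basis of W
   is output with probability proportional to 2^(n+1) - 1 independently of W,
   and the exceptional samples contribute only O(2^-n) in total variation. *)

Lemma F2_addrr (x : 'F_2) : x + x = 0.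
Proof. exact: (addrr_pchar2 (pchar_Fp (isT : prime 2))). Qed.

Lemma F2_neq0 (x : 'F_2) : (x != 0) = (x == 1).
Proof. by case: x => [[|[|m]] //= Hm]. Qed.

Lemma sumr_indicator (R : pzSemiRingType) (T : finType) (P : pred T) :
  \sum_x (P x)%:R = #|P|%:R :> R.
Proof.
rewrite -sum1_card natr_sum [RHS]big_mkcond /=.
by apply: eq_bigr => x _; rewrite unfold_in; case: (P x).
Qed.

Lemma sum_eq_indicator (R : pzSemiRingType) (T : finType) (a : T) (F : T -> R) :
  \sum_x (x == a)%:R * F x = F a.
Proof.
by rewrite (bigD1 a) //= eqxx mul1r big1 ?addr0 // => x /negbTE->; rewrite mul0r.
Qed.

Section SymplecticForm.
Variable n : nat.
Implicit Types (u v : vec n) (j k : 'I_(n + n)) (M : 'M['F_2]_(n + n)).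

Definition swap_half j : 'I_(n + n) :=
  match split j with inl i => rshift n i | inr i => lshift n i end.

Lemma swap_half_lshift i : swap_half (lshift n i) = rshift n i.
Proof. by rewrite /swap_half (unsplitK (inl _ i)). Qed.

Lemma swap_half_rshift i : swap_half (rshift n i) = lshift n i.
Proof. by rewrite /swap_half (unsplitK (inr _ i)). Qed.

Lemma swap_halfK : involutive swap_half.
Proof.
by move=> j; case: (split_ordP j) => i ->;
  rewrite ?swap_half_lshift ?swap_half_rshift ?swap_half_lshift.
Qed.

Lemma swap_half_eq j k : (swap_half j == k) = (j == swap_half k).
Proof. exact: (can2_eq swap_halfK swap_halfK). Qed.

(* The Gram matrix of [sympl]; in characteristic 2 it has no signs. *)
Definition gram : 'M['F_2]_(n + n) := \matrix_(j, k) (swap_half j == k)%:R.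

Lemma mul_gram u : u *m gram = \row_j u 0 (swap_half j).
Proof.
apply/rowP => j; rewrite !mxE (bigD1 (swap_half j)) //= big1 => [|l hl].
  by rewrite !mxE swap_halfK eqxx mulr1 addr0.
by rewrite !mxE swap_half_eq (negbTE hl) mulr0.
Qed.

Lemma gram_sqr : gram *m gram = 1%:M.
Proof.
apply/row_matrixP => j; rewrite row_mul mul_gram row1.
by apply/rowP => k; rewrite !mxE (inj_eq (can_inj swap_halfK)) eq_sym.
Qed.

Lemma symplE u v : sympl u v = (u *m gram *m v^T) 0 0.
Proof.
rewrite mul_gram mxE big_split_ord /= addrC /sympl big_split /=.
by congr (_ + _); apply: eq_bigr => i _;
  rewrite !mxE ?swap_half_lshift ?swap_half_rshift // mulrC.
Qed.

Lemma symplC u v : sympl u v = sympl v u.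
Proof. by apply: eq_bigr => i _; rewrite addrC. Qed.

Lemma sympl_xx u : sympl u u = 0.
Proof. by rewrite /sympl big1 // => i _; rewrite F2_addrr. Qed.

Lemma sympl0l v : sympl 0 v = 0.
Proof. by rewrite symplE !mul0mx mxE. Qed.

Lemma sympl_addl u u' v : sympl (u + u') v = sympl u v + sympl u' v.
Proof. by rewrite !symplE !mulmxDl mxE. Qed.

Lemma sympl_scalel a u v : sympl (a *: u) v = a * sympl u v.
Proof. by rewrite !symplE -!scalemxAl mxE. Qed.

Lemma sympl_addr u v v' : sympl u (v + v') = sympl u v + sympl u v'.
Proof. by rewrite symplC sympl_addl !(symplC u). Qed.

Lemma sympl_scaler a u v : sympl u (a *: v) = a * sympl u v.
Proof. by rewrite symplC sympl_scalel symplC. Qed.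

Lemma sympl_delta u j : sympl u (delta_mx 0 j) = u 0 (swap_half j).
Proof. by rewrite symplE trmx_delta -colE mul_gram !mxE. Qed.

Lemma gram_rowE M j k : (M *m gram *m M^T) j k = sympl (row j M) (row k M).
Proof. by rewrite symplE -row_mul !mxE; apply: eq_bigr => l _; rewrite !mxE. Qed.

(* For the right action [u |-> u *m M] on row vectors; [act C] is the right
   action of [C^T]. *)
Definition symplectic M := M *m gram *m M^T == gram.

Lemma sympl_mulmx M u v : symplectic M -> sympl (u *m M) (v *m M) = sympl u v.
Proof.
move/eqP=> hM; rewrite !symplE trmx_mul !mulmxA.
by rewrite -(mulmxA u) -(mulmxA u) hM.
Qed.

Lemma symplectic_rows (R : 'I_(n + n) -> vec n) :
  (forall j k, sympl (R j) (R k) = (swap_half j == k)%:R) ->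
  symplectic (\matrix_j R j).
Proof. by move=> hR; apply/eqP/matrixP => j k; rewrite gram_rowE !rowK hR mxE. Qed.

Lemma symplectic_perm (s : 'I_(n + n) -> 'I_(n + n)) :
  injective s -> (forall j, s (swap_half j) = swap_half (s j)) ->
  symplectic (\matrix_j delta_mx 0 (s j)).
Proof.
move=> s_inj s_swap; apply: symplectic_rows => j k.
by rewrite sympl_delta mxE eqxx /= -s_swap (inj_eq s_inj) swap_half_eq eq_sym.
Qed.

Lemma symplectic_mul M M' : symplectic M -> symplectic M' -> symplectic (M *m M').
Proof.
move=> /eqP hM /eqP hM'; apply/eqP.
by rewrite trmx_mul !mulmxA -(mulmxA M) -(mulmxA M) hM'.
Qed.

Lemma symplectic_unit M : symplectic M -> M \in unitmx.
Proof.
move=> /eqP hM; suff /mulmx1_unit[] : M *m (gram *m M^T *m gram) = 1%:M by [].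
by rewrite !mulmxA hM gram_sqr.
Qed.

Lemma tr_gram : gram^T = gram.
Proof. by apply/matrixP => j k; rewrite !mxE swap_half_eq eq_sym. Qed.

Lemma symplectic_gram : symplectic gram.
Proof.
have -> : gram = \matrix_j delta_mx 0 (swap_half j).
  by apply/matrixP => j k; rewrite !mxE eqxx eq_sym.
exact: symplectic_perm (can_inj swap_halfK) (fun j => erefl).
Qed.

End SymplecticForm.

Arguments gram {n}.

Lemma actE n (C : 'M['F_2]_(n + n)) v : act C v = v *m C^T.
Proof. by rewrite /act trmx_mul trmxK. Qed.

Lemma mul_delta_rows (R : pzSemiRingType) m (s : 'I_m -> 'I_m) (v : 'rV[R]_m) :
  involutive s -> v *m \matrix_j delta_mx 0 (s j) = \row_i v 0 (s i).
Proof.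
move=> sK; apply/rowP => i; rewrite !mxE (bigD1 (s i)) //= big1 => [|j hj].
  by rewrite !mxE sK !eqxx mulr1 addr0.
by rewrite !mxE [i == _]eq_sym (canF_eq sK) (negbTE hj) andbF mulr0.
Qed.

Lemma tr_mx_of_cols n (img : 'I_(n + n) -> vec n) :
  (mx_of_cols img)^T = \matrix_j img j.
Proof. by apply/matrixP => i j; rewrite !mxE. Qed.

Lemma swapiK m (a b : 'I_m) : involutive (swapi a b).
Proof.
move=> j; rewrite /swapi; case: (eqVneq j a) => [->|ja].
  by rewrite eqxx; case: eqVneq => [->|]; rewrite ?eqxx.
by case: (eqVneq j b) => [->|jb]; rewrite ?eqxx // (negbTE ja) (negbTE jb).
Qed.

Lemma swapi_inj m m' (f : 'I_m -> 'I_m') (a b i : 'I_m) :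
  injective f -> swapi (f a) (f b) (f i) = f (swapi a b i).
Proof. move=> f_inj; rewrite /swapi !(inj_eq f_inj); by case: (i == a); case: (i == b). Qed.

Lemma swapi_out m (a b i : 'I_m) : i != a -> i != b -> swapi a b i = i.
Proof. by rewrite /swapi => /negbTE-> /negbTE->. Qed.

Section Ensemble.
Variable n : nat.
Implicit Types (r v : vec n) (z k : 'I_n).

Definition swap2 z k j : 'I_(n + n) :=
  swapi (rshift n z) (rshift n k) (swapi (lshift n z) (lshift n k) j).

Lemma swap2_lshift z k i : swap2 z k (lshift n i) = lshift n (swapi z k i).
Proof.
by rewrite /swap2 (swapi_inj _ _ _ (@lshift_inj n n)) swapi_out ?eq_lrshift.
Qed.

Lemma swap2_rshift z k i : swap2 z k (rshift n i) = rshift n (swapi z k i).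
Proof.
rewrite /swap2 (@swapi_out _ (lshift n z)) 1?eq_sym ?eq_lrshift //.
exact: swapi_inj (@rshift_inj n n).
Qed.

Lemma swap2K z k : involutive (swap2 z k).
Proof.
by move=> j; case: (split_ordP j) => i ->;
  rewrite ?swap2_lshift ?swap2_rshift ?swap2_lshift swapiK.
Qed.

Lemma swap2_swap_half z k j : swap2 z k (swap_half j) = swap_half (swap2 z k j).
Proof.
by case: (split_ordP j) => i ->; rewrite ?swap_half_lshift ?swap_half_rshift
  ?swap2_lshift ?swap2_rshift ?swap_half_lshift ?swap_half_rshift.
Qed.

Lemma sympl_e_l z v : sympl (e_ z) v = v 0 (rshift n z).
Proof. by rewrite symplC sympl_delta swap_half_lshift. Qed.

Lemma e_rshift z i : e_ z 0 (rshift n i) = 0.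
Proof. by rewrite mxE eq_rlshift andbF. Qed.

Definition c0_col r z j : vec n :=
  if j == lshift n z then e_ z
  else if j == rshift n z then r
  else delta_mx 0 j + sympl r (delta_mx 0 j) *: e_ z.

Lemma c0_col_sympl r z : r 0 (rshift n z) = 1 -> forall j k : 'I_(n + n),
  sympl (c0_col r z j) (c0_col r z k) = (swap_half j == k)%:R.
Proof.
move=> rz1.
have gram_sym (j k : 'I_(n + n)) : (swap_half j == k) = (swap_half k == j).
  by rewrite swap_half_eq eq_sym.
have c0_e (k : 'I_(n + n)) : sympl (c0_col r z (lshift n z)) (c0_col r z k)
    = (swap_half (lshift n z) == k)%:R.
  rewrite swap_half_lshift /c0_col eqxx; case: (eqVneq k (lshift n z)) => [->|k_l].
    by rewrite sympl_xx eq_rlshift.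
  case: (eqVneq k (rshift n z)) => [_|k_r]; first by rewrite sympl_e_l rz1.
  rewrite sympl_addr sympl_scaler !sympl_e_l e_rshift mulr0 addr0 mxE.
  by rewrite eq_sym (negbTE k_r).
have c0_r (k : 'I_(n + n)) : sympl (c0_col r z (rshift n z)) (c0_col r z k)
    = (swap_half (rshift n z) == k)%:R.
  rewrite swap_half_rshift /c0_col eq_rlshift eqxx; case: (eqVneq k (lshift n z)) => [_|k_l].
    by rewrite symplC sympl_e_l rz1.
  case: (eqVneq k (rshift n z)) => [_|k_r]; first by rewrite sympl_xx.
  by rewrite sympl_addr sympl_scaler [sympl r (e_ z)]symplC sympl_e_l rz1 mulr1 F2_addrr.
move=> j k; case: (eqVneq j (lshift n z)) => [->|j_l]; first exact: c0_e.
case: (eqVneq j (rshift n z)) => [->|j_r]; first exact: c0_r.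
case: (eqVneq k (lshift n z)) => [->|k_l]; first by rewrite symplC c0_e gram_sym.
case: (eqVneq k (rshift n z)) => [->|k_r]; first by rewrite symplC c0_r gram_sym.
rewrite /c0_col (negbTE j_l) (negbTE j_r) (negbTE k_l) (negbTE k_r).
rewrite !(sympl_addl, sympl_addr, sympl_scalel, sympl_scaler) sympl_xx !sympl_e_l.
rewrite [sympl _ (e_ z)]symplC sympl_e_l !mxE !(eq_sym (rshift n z)) (negbTE j_r) (negbTE k_r).
by rewrite !(mulr0, addr0) sympl_delta mxE eqxx /= gram_sym.
Qed.

Lemma first_k_Some r k : first_k r = Some k -> r 0 (rshift n k) = 1.
Proof. by rewrite /first_k; case: pickP => // x /andP[/eqP hx _] [<-]. Qed.

Lemma CmatE r k : first_k r = Some k ->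
  let z := ord0_of k in
  (Cmat r)^T = \matrix_j c0_col (\row_j r 0 (swapi (rshift n z) (rshift n k) j)) z j
               *m \matrix_j delta_mx 0 (swap2 z k j).
Proof. by rewrite /Cmat => ->; rewrite trmx_mul !tr_mx_of_cols. Qed.

Lemma Cmat_symplectic r : symplectic (Cmat r)^T.
Proof.
case E: (first_k r) => [k|]; last first.
  by rewrite /Cmat E trmx1 /symplectic mul1mx trmx1 mulmx1.
rewrite (CmatE E); apply: symplectic_mul.
  by apply/symplectic_rows/c0_col_sympl; rewrite mxE /swapi eqxx first_k_Some.
exact/symplectic_perm/swap2_swap_half/can_inj/swap2K.
Qed.

Lemma Cmat_sympl r v w : sympl (act (Cmat r) v) (act (Cmat r) w) = sympl v w.
Proof. by rewrite !actE sympl_mulmx ?Cmat_symplectic. Qed.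

Lemma first_k_None r : first_k r = None -> forall i, r 0 (rshift n i) = 0.
Proof.
move=> E i; apply/eqP; apply: contraT; rewrite F2_neq0 => ri.
pose P k := r 0 (rshift n k) == 1.
have [k /eqP rk k_min] := @arg_minnP _ i P val ri.
move: E; rewrite /first_k; case: pickP => // /(_ k); rewrite /= rk eqxx /=.
case/forallPn => l; rewrite negb_imply F2_neq0 => /andP[lk rl].
by rewrite ltnNge k_min in lk.
Qed.

Lemma first_k0 : first_k (0 : vec n) = None.
Proof. by rewrite /first_k; case: pickP => // k /andP[]; rewrite mxE. Qed.

Lemma card_first_k_None : (#|[pred r : vec n | first_k r == None]| <= 2 ^ n)%N.
Proof.
pose a_part r : 'rV['F_2]_n := \row_i r 0 (lshift n i).
rewrite -(card_in_imset (f := a_part)); last first.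
  move=> r r' /eqP r_none /eqP r'_none /rowP a_eq; apply/rowP => j.
  case: (split_ordP j) => i ->; first by have := a_eq i; rewrite !mxE.
  by rewrite (first_k_None r_none) (first_k_None r'_none).
by apply: leq_trans (max_card _) _; rewrite card_mx card_Fp // mul1n.
Qed.

Lemma eq_first_k r r' : (forall i, r 0 (rshift n i) = r' 0 (rshift n i)) ->
  first_k r = first_k r'.
Proof.
move=> rr'; apply: eq_pick => k /=; rewrite rr'; congr (_ && _).
by apply: eq_forallb => i; rewrite rr'.
Qed.

(* [Cmat r] maps f_1 to [aswap r], not to [r]: the permutation Pi also swaps
   the a-coordinates 1 and k.  Only bijectivity of [aswap] matters below. *)
Definition aswap r : vec n :=
  if first_k r is Some k then \row_i r 0 (swapi (lshift n (ord0_of k)) (lshift n k) i)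
  else r.

Lemma first_k_aswap r : first_k (aswap r) = first_k r.
Proof.
rewrite /aswap; case E: (first_k r) => [k|] //; rewrite -E.
by apply: eq_first_k => i; rewrite mxE swapi_out // eq_sym eq_lrshift.
Qed.

Lemma aswapK : involutive aswap.
Proof.
move=> r; rewrite {1}/aswap first_k_aswap /aswap; case: (first_k r) => [k|] //.
by apply/rowP => i; rewrite !mxE swapiK.
Qed.

Lemma Cmat_f1 r k : first_k r = Some k -> act (Cmat r) (f_ (ord0_of k)) = aswap r.
Proof.
move=> E; rewrite actE (CmatE E) mulmxA -rowE rowK /c0_col eq_rlshift eqxx.
rewrite mul_delta_rows; last exact: swap2K.
apply/rowP => i.
by rewrite /aswap E !mxE /swap2 swapiK.
Qed.

End Ensemble.

Section Invariance.
Variable n : nat.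
Implicit Types (x : vec n) (M : 'M['F_2]_(n + n)).

Lemma span_setE m (X : 'M_(m, n + n)) : span_set X = rowg X.
Proof. by []. Qed.

Lemma eq_span_set m1 m2 (A : 'M_(m1, n + n)) (B : 'M_(m2, n + n)) :
  (span_set A == span_set B) = (A == B)%MS.
Proof. by rewrite !span_setE eqEsubset !rowgS. Qed.

Lemma isotropic_spanP m (X : 'M_(m, n + n)) :
  reflect (forall u v, (u <= X)%MS -> (v <= X)%MS -> sympl u v = 0)
          (isotropic (span_set X)).
Proof.
apply: (iffP forall_inP) => [iso u v uX vX | iso u].
  by move: (iso u); rewrite inE => /(_ uX)/forall_inP/(_ v); rewrite inE => /(_ vX)/eqP.
by rewrite inE => uX; apply/forall_inP => v; rewrite inE => vX; rewrite iso.
Qed.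

Definition orth m (X : 'M_(m, n + n)) x := [forall v in span_set X, sympl v x == 0].

Lemma orthP m (X : 'M_(m, n + n)) x :
  reflect (forall u, (u <= X)%MS -> sympl u x = 0) (orth X x).
Proof.
apply: (iffP forall_inP) => [perp u uX | perp u].
  by apply/eqP/perp; rewrite inE.
by rewrite inE => uX; rewrite perp.
Qed.

Lemma orth0 m (X : 'M_(m, n + n)) : orth X 0.
Proof. by apply/orthP => u _; rewrite symplC sympl0l. Qed.

Lemma isotropic_mulmx m (X : 'M_(m, n + n)) M : symplectic M ->
  isotropic (span_set (X *m M)) = isotropic (span_set X).
Proof.
move=> hM; apply/isotropic_spanP/isotropic_spanP => iso u v.
  by move=> uX vX; rewrite -(sympl_mulmx _ _ hM) iso ?submxMr.
case/submxP=> a -> /submxP[b ->].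
by rewrite !mulmxA sympl_mulmx // iso ?submxMl.
Qed.

Lemma orth_mulmx m (X : 'M_(m, n + n)) M x : symplectic M ->
  orth (X *m M) (x *m M) = orth X x.
Proof.
move=> hM; apply/orthP/orthP => perp u.
  by move=> uX; rewrite -(sympl_mulmx _ _ hM) perp ?submxMr.
by case/submxP=> a ->; rewrite mulmxA sympl_mulmx // perp ?submxMl.
Qed.

Definition nbases m (X : 'M_(m, n + n)) := #|bases (span_set X)|.

Lemma nbases_mulmx m (X : 'M_(m, n + n)) M : M \in unitmx ->
  nbases (X *m M) = nbases X.
Proof.
move=> uM; rewrite /nbases -[RHS](card_imset _ (can_inj (mulmxK uM))).
have free_M p (Y : 'M_(p, n + n)) : row_free (Y *m M) = row_free Y.
  by rewrite /row_free mxrankMfree ?row_free_unit.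
have span_M p (Y : 'M_(p, n + n)) : (span_set (Y *m M) == span_set (X *m M)) =
    (span_set Y == span_set X).
  by rewrite !eq_span_set !submxMfree ?row_free_unit.
apply: eq_card => Y; apply/idP/imsetP => [|[Y0 + ->]]; rewrite !inE.
  move=> /andP[freeY spanY]; exists (Y *m invmx M); last by rewrite mulmxKV.
  by rewrite inE -free_M -span_M mulmxKV ?freeY.
by rewrite free_M span_M.
Qed.

End Invariance.

Section Distributions.
Variables (n : nat) (z0 : 'I_n).
Hypothesis z0_val : val z0 = 0%N.
Local Notation f1 := (f_ z0).
Local Notation Mx := 'M['F_2]_(n.-1, n + n).
Local Notation nvec := (#|{: vec n}|%:R : rat).
Local Notation niso := (#|iso_subspaces n|%:R : rat).
Local Notation niso1 := (#|iso_subspaces_f1 n|%:R : rat).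
Implicit Types (W : Mx) (x : vec n).

Definition good W := row_free W && isotropic (span_set W).

Lemma nbases_gt0 W : row_free W -> (0 < nbases W)%N.
Proof. by move=> freeW; apply/card_gt0P; exists W; rewrite inE freeW /=. Qed.

Lemma mem_iso_subspaces W : row_free W ->
  (span_set W \in iso_subspaces n) = isotropic (span_set W).
Proof. by move=> /nbases_gt0; rewrite inE card_gt0 => ->. Qed.

Lemma mem_iso_subspaces_f1 W : row_free W ->
  (span_set W \in iso_subspaces_f1 n) = isotropic (span_set W) && orth W f1.
Proof.
move=> freeW; rewrite inE mem_iso_subspaces //; congr (_ && _).
apply/forallP/orthP => [/(_ z0)|perp z].
  by rewrite z0_val eqxx => /forall_inP perp u uW; apply/eqP/perp; rewrite inE.
apply/implyP => /eqP z_val; have -> : z = z0 by apply/val_inj; rewrite /= z_val z0_val.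
by apply/forall_inP => v; rewrite inE => vW; apply/eqP/perp.
Qed.

Lemma sum_bases (SS : {set {set vec n}}) (F : Mx -> rat) :
  \sum_(V in SS) \sum_(B in bases V) F B =
  \sum_B (row_free B && (span_set B \in SS))%:R * F B.
Proof.
rewrite (exchange_big_dep predT) //=; apply: eq_bigr => B _.
case hB: (row_free B && (span_set B \in SS)).
  rewrite mul1r (big_pred1 (span_set B)) // => V /=; rewrite inE.
  case/andP: hB => -> BS.
  by case: (eqVneq V (span_set B)) => [->|_]; rewrite ?BS ?eqxx ?andbF.
rewrite mul0r big_pred0 // => V; rewrite inE; apply: contraFF hB.
by case/and3P => VS -> /eqP ->.
Qed.

Lemma act_rowsE (C : 'M['F_2]_(n + n)) B : act_rows C B = B *m C^T.
Proof. by apply/row_matrixP => i; rewrite rowK row_mul actE. Qed.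

Lemma sum_bases_nbases (SS : {set {set vec n}}) (F : Mx -> nat -> rat) :
  \sum_(V in SS) \sum_(B in bases V) F B #|bases V| =
  \sum_B (row_free B && (span_set B \in SS))%:R * F B (nbases B).
Proof.
rewrite -sum_bases; apply: eq_bigr => V _; apply: eq_bigr => B.
by rewrite inE => /andP[_ /eqP <-].
Qed.

Lemma sum_inv_nbases (SS : {set {set vec n}}) :
  (forall V, V \in SS -> bases V != set0) ->
  \sum_(W : Mx) (row_free W && (span_set W \in SS))%:R / (nbases W)%:R = #|SS|%:R :> rat.
Proof.
move=> basesSS; rewrite -(sum_bases_nbases _ (fun _ k => k%:R^-1)) -sumr_const.
apply: eq_bigr => V /basesSS; rewrite -card_gt0 sumr_const -[LHS]mulr_natr => ?.
by rewrite mulVf // pnatr_eq0 -lt0n.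
Qed.

Lemma good_mulmx W M : symplectic M -> good (W *m M) = good W.
Proof.
by move=> hM; rewrite /good /row_free mxrankMfree ?row_free_unit ?symplectic_unit
  ?isotropic_mulmx.
Qed.

Lemma src_distE W : src_dist W =
  \sum_r (good W && orth W (act (Cmat r) f1))%:R / (nvec * niso1 * (nbases W)%:R).
Proof.
apply: eq_bigr => r _; rewrite actE; set M := (Cmat r)^T.
have hM : symplectic M := Cmat_symplectic r; have uM := symplectic_unit hM.
rewrite (sum_bases_nbases _ (fun B k => (act_rows (Cmat r) B == W)%:R / (nvec * niso1 * k%:R))).
rewrite (reindex_inj (can_inj (mulmxKV uM))) /=.
under eq_bigr do rewrite act_rowsE mulmxKV // mulrCA.
rewrite sum_eq_indicator nbases_mulmx ?unitmx_inv // -[in RHS](mulmxKV uM W).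
rewrite good_mulmx // orth_mulmx // mulmxKV //.
by case freeW: (row_free _); rewrite /= ?mem_iso_subspaces_f1 // /good freeW.
Qed.

Lemma tgt_distE W : tgt_dist W = (good W)%:R / (niso * (nbases W)%:R).
Proof.
rewrite /tgt_dist (sum_bases_nbases _ (fun B k => (B == W)%:R / (niso * k%:R))).
under eq_bigr do rewrite mulrCA.
by rewrite sum_eq_indicator /good; case freeW: (row_free W); rewrite /= ?mem_iso_subspaces.
Qed.

End Distributions.

Section OrthCount.
Variable n : nat.

Lemma orth_ker m (W : 'M_(m, n + n)) (x : vec n) :
  orth W x = (x *m gram <= kermx W^T)%MS.
Proof.
have gramW : x *m gram *m W^T = (W *m gram *m x^T)^T.
  by rewrite !trmx_mul tr_gram trmxK mulmxA.
apply/orthP/sub_kermxP => [perp | ker u]; rewrite ?gramW.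
  apply/matrixP => i j; rewrite (ord1 i) !mxE -[RHS](perp (row j W)) ?row_sub //.
  by rewrite symplE -row_mul [RHS]mxE; apply: eq_bigr => k _; rewrite [in RHS]mxE.
case/submxP => a ->; rewrite symplE -!mulmxA (mulmxA W).
by move/(congr1 trmx): ker; rewrite gramW trmxK trmx0 => ->; rewrite !mulmx0 mxE.
Qed.

Lemma card_orth (W : 'M_(n.-1, n + n)) : row_free W -> (0 < n)%N ->
  #|[pred x | orth W x]| = (2 ^ n.+1)%N.
Proof.
move=> freeW n_gt0.
transitivity #|(mulmx^~ gram) @^-1: rowg (kermx W^T)|.
  by apply: eq_card => x; rewrite !inE orth_ker.
rewrite card_preimset; last by apply: (can_inj (g := mulmx^~ gram)) => x;
  rewrite -mulmxA gram_sqr mulmx1.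
rewrite card_rowg card_Fp // mxrank_ker mxrank_tr (eqP freeW); congr (_ ^ _)%N.
by case: n n_gt0 => // m _; rewrite /=; lia.
Qed.

End OrthCount.

Section Transitivity.
Variables (n : nat) (z0 : 'I_n).
Hypothesis z0_val : val z0 = 0%N.
Local Notation f1 := (f_ z0).
Local Notation niso1 := (#|iso_subspaces_f1 n|%:R : rat).
Implicit Types (x : vec n) (M : 'M['F_2]_(n + n)).

Lemma ord0_ofE k : ord0_of k = z0.
Proof. by apply/val_inj; rewrite /= z0_val. Qed.

Lemma symplectic_transitive x : x != 0 -> exists2 M, symplectic M & f1 *m M = x.
Proof.
have via_Cmat y : first_k y != None -> exists2 M, symplectic M & f1 *m M = y.
  case E: (first_k y) => [k|] // _.
  exists (Cmat (aswap y))^T; first exact: Cmat_symplectic.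
  have E' : first_k (aswap y) = Some k by rewrite first_k_aswap.
  by rewrite -actE -(ord0_ofE k) (Cmat_f1 E') aswapK.
move=> x_neq0; case E: (first_k x) => [k|]; first by apply: via_Cmat; rewrite E.
have [|M hM f1M] := via_Cmat (x *m gram).
  apply: contra x_neq0 => /eqP/first_k_None xg0; apply/eqP/rowP => j.
  case: (split_ordP j) => i ->; rewrite mxE; last exact: first_k_None E i.
  by have := xg0 i; rewrite mul_gram mxE swap_half_rshift.
exists (M *m gram); first exact: symplectic_mul hM (symplectic_gram _).
by rewrite mulmxA f1M -mulmxA gram_sqr mulmx1.
Qed.

(* The number of (n-1)-dimensional isotropic subspaces orthogonal to [x],
   counted through their bases so that it is visibly invariant under
   symplectic maps. *)
Definition orth_weight x : rat :=
  \sum_(W : 'M_(n.-1, n + n)) (good W && orth W x)%:R / (nbases W)%:R.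

Lemma orth_weight_mulmx x M : symplectic M -> orth_weight (x *m M) = orth_weight x.
Proof.
move=> hM; have uM := symplectic_unit hM.
rewrite /orth_weight (reindex_inj (can_inj (mulmxK uM))) /=.
by apply: eq_bigr => W _; rewrite good_mulmx // orth_mulmx // nbases_mulmx.
Qed.

Lemma orth_weight_f1 : orth_weight f1 = niso1.
Proof.
rewrite -sum_inv_nbases => [|V]; last by rewrite !inE -andbA => /andP[].
apply: eq_bigr => W _; rewrite /good.
by case freeW: (row_free W); rewrite //= (mem_iso_subspaces_f1 z0_val).
Qed.

Lemma orth_weight_neq0 x : x != 0 -> orth_weight x = niso1.
Proof.
by case/symplectic_transitive => M hM <-; rewrite orth_weight_mulmx ?orth_weight_f1.
Qed.

End Transitivity.

Lemma sum_dist_le_scaled (R : realFieldType) (T : finType) (p q c : T -> R) (mu : R) :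
  \sum_x p x = 1 -> \sum_x q x = 1 -> (forall x, 0 <= q x) ->
  (forall x, c x = mu * q x) ->
  \sum_x `|p x - q x| <= 2 * \sum_x `|p x - c x|.
Proof.
move=> p1 q1 q_ge0 cE.
have tri : \sum_x `|p x - q x| <= \sum_x `|p x - c x| + \sum_x `|c x - q x|.
  by rewrite -big_split; apply: ler_sum => x _; apply: ler_distD.
have cq : \sum_x `|c x - q x| = `|mu - 1|.
  under eq_bigr do rewrite cE -{2}[q _]mul1r -mulrBl normrM (ger0_norm (q_ge0 _)).
  by rewrite -mulr_sumr q1 mulr1.
have mu_near : `|mu - 1| <= \sum_x `|p x - c x|.
  have -> : mu - 1 = \sum_x (c x - p x).
    by rewrite sumrB p1; under eq_bigr do rewrite cE; rewrite -mulr_sumr q1 mulr1.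
  by apply: le_trans (ler_norm_sum _ _ _) _; apply: ler_sum => x _; rewrite distrC.
lra.
Qed.

Section TotalVariation.
Variables (n : nat) (z0 : 'I_n).
Hypothesis z0_val : val z0 = 0%N.
Hypothesis iso_f1_gt0 : (0 < #|iso_subspaces_f1 n|)%N.
Local Notation f1 := (f_ z0).
Local Notation Mx := 'M['F_2]_(n.-1, n + n).
Local Notation nvec := (#|{: vec n}|%:R : rat).
Local Notation niso := (#|iso_subspaces n|%:R : rat).
Local Notation niso1 := (#|iso_subspaces_f1 n|%:R : rat).
Local Notation src := (@src_dist n).
Local Notation tgt := (@tgt_dist n).
(* The number of nonzero vectors orthogonal to a row-free [W : Mx]. *)
Local Notation K := ((2 ^ n.+1)%:R - 1 : rat).
Implicit Types (W : Mx) (r : vec n).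

Lemma nvec_gt0 : 0 < nvec.
Proof. by rewrite ltr0n; apply/card_gt0P; exists 0. Qed.

Lemma niso_gt0 : 0 < niso.
Proof.
case/card_gt0P: iso_f1_gt0 => V; rewrite inE => /andP[V_iso _].
by rewrite ltr0n; apply/card_gt0P; exists V.
Qed.

Lemma niso1_neq0 : niso1 != 0.
Proof. by rewrite pnatr_eq0 -lt0n. Qed.

Lemma nvec_niso1_neq0 : nvec * niso1 != 0.
Proof. by rewrite mulf_neq0 ?niso1_neq0 ?lt0r_neq0 ?nvec_gt0. Qed.

Definition nhits W : rat := \sum_r (orth W (act (Cmat r) f1))%:R.

Lemma src_dist_nhits W :
  src W = (good W)%:R * nhits W / (nbases W)%:R / (nvec * niso1).
Proof.
rewrite (src_distE z0_val) /nhits mulr_sumr mulr_suml mulr_suml.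
apply: eq_bigr => r _.
by rewrite -mulnb natrM [_ * (nbases W)%:R]mulrC invfM mulrA.
Qed.

Lemma src_dist_sum1 : \sum_W src W = 1.
Proof.
under eq_bigr do rewrite src_dist_nhits.
rewrite -mulr_suml -[RHS](mulfV nvec_niso1_neq0); congr (_ / _).
transitivity (\sum_r orth_weight (act (Cmat r) f1)).
  rewrite /orth_weight exchange_big; apply: eq_bigr => W _.
  rewrite /nhits mulr_sumr mulr_suml; apply: eq_bigr => r _.
  by rewrite -natrM mulnb.
rewrite [RHS]mulr_natl -sumr_const; apply: eq_bigr => r _.
by rewrite actE orth_weight_mulmx ?Cmat_symplectic // orth_weight_f1.
Qed.

Lemma tgt_dist_ge0 W : 0 <= tgt W.
Proof. by rewrite tgt_distE divr_ge0 ?mulr_ge0 ?ler0n. Qed.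

Lemma tgt_dist_sum1 : \sum_W tgt W = 1.
Proof.
under eq_bigr do rewrite tgt_distE [niso * _]mulrC invfM mulrA.
rewrite -mulr_suml -[RHS](mulfV (lt0r_neq0 niso_gt0)); congr (_ * _).
rewrite -sum_inv_nbases => [|V]; last by rewrite inE => /andP[].
apply: eq_bigr => W _; rewrite /good.
by case freeW: (row_free W); rewrite //= mem_iso_subspaces.
Qed.

Definition approx W : rat := (good W)%:R * K / (nbases W)%:R / (nvec * niso1).

Lemma approx_tgt W : approx W = (K * niso / (nvec * niso1)) * tgt W.
Proof.
rewrite /approx tgt_distE; case goodW: (good W); last by rewrite !(mul0r, mulr0).
have /nbases_gt0 : row_free W by case/andP: goodW.
rewrite -(ltr0n rat) => /lt0r_neq0 k_neq0; field.
by rewrite k_neq0 (lt0r_neq0 niso_gt0) niso1_neq0 (lt0r_neq0 nvec_gt0).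
Qed.

Lemma nhits_split W : nhits W =
  \sum_(r : vec n | first_k r == None) (orth W f1)%:R
  + \sum_(r : vec n | first_k r != None) (orth W r)%:R.
Proof.
rewrite /nhits (bigID (fun r => first_k r == None)) /=; congr (_ + _).
  by apply: eq_bigr => r /eqP E; rewrite /Cmat E actE trmx1 mulmx1.
rewrite [RHS](reindex_inj (can_inj (@aswapK n))) /=.
apply: eq_big => [r|r]; first by rewrite first_k_aswap.
by case E: (first_k r) => [k|] // _; rewrite -(ord0_ofE z0_val k) (Cmat_f1 E).
Qed.

Definition hits_error W : rat :=
  \sum_(r : vec n | first_k r == None) ((orth W f1)%:R + (r != 0)%:R * (orth W r)%:R).

Lemma nhits_near W : row_free W -> `|nhits W - K| <= hits_error W.
Proof.
move=> freeW; have n_gt0 : (0 < n)%N by case: (n) z0 => [[]|].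
have orth_total : \sum_(r : vec n | first_k r == None) (orth W r)%:R
    + \sum_(r : vec n | first_k r != None) (orth W r)%:R = (2 ^ n.+1)%:R :> rat.
  rewrite -(card_orth freeW n_gt0) -sumr_indicator.
  by rewrite [RHS](bigID (fun r => first_k r == None)).
have zero_bad : \sum_(r : vec n | first_k r == None) (r == 0)%:R = 1 :> rat.
  rewrite (bigD1 0) /= ?first_k0 // eqxx big1 ?addr0 // => r /andP[_].
  by move/negbTE->.
have -> : nhits W - K = \sum_(r : vec n | first_k r == None)
    ((orth W f1)%:R - (orth W r)%:R + (r == 0)%:R).
  by rewrite big_split sumrB /= zero_bad -orth_total nhits_split; ring.
apply: le_trans (ler_norm_sum _ _ _) _; apply: ler_sum => r _; rewrite ler_norml.
case: (eqVneq r 0) => [->|_]; rewrite ?orth0 /=;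
  by case: (orth W f1); case: (orth W r); rewrite /=; lra.
Qed.

Lemma src_dist_approx W :
  `|src W - approx W| <= (good W)%:R * hits_error W / (nbases W)%:R / (nvec * niso1).
Proof.
rewrite src_dist_nhits /approx -!mulrBl -mulrBr.
case goodW: (good W); last by rewrite !mul0r normr0.
have freeW : row_free W by case/andP: goodW.
rewrite !normrM !normfV !normrM !normr_nat !mul1r.
by rewrite !ler_wpM2r ?invr_ge0 ?mulr_ge0 ?ler0n ?nhits_near.
Qed.

Lemma sum_hits_error :
  \sum_W (good W)%:R * hits_error W / (nbases W)%:R / (nvec * niso1) <= 2 / (2 ^ n)%:R.
Proof.
rewrite -mulr_suml.
have -> : \sum_W (good W)%:R * hits_error W / (nbases W)%:R = \sum_(r : vec n |
    first_k r == None) (orth_weight f1 + (r != 0)%:R * orth_weight r).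
  under eq_bigr do rewrite /hits_error mulr_sumr mulr_suml.
  rewrite exchange_big /=; apply: eq_bigr => r _.
  rewrite /orth_weight mulr_sumr -big_split /=; apply: eq_bigr => W _.
  by rewrite -!mulnb !natrM; ring.
have niso1_gt0 : 0 < niso1 by rewrite ltr0n.
have bad_sum : \sum_(r : vec n | first_k r == None)
    (orth_weight f1 + (r != 0)%:R * orth_weight r) <= (2 ^ n)%:R * (2 * niso1).
  apply: le_trans (_ : \sum_(r : vec n | first_k r == None) 2 * niso1 <= _).
    apply: ler_sum => r _; rewrite (orth_weight_f1 z0_val).
    by case: (eqVneq r 0) => [_|/(orth_weight_neq0 z0_val)->] /=; lra.
  rewrite sumr_const -[leLHS]mulr_natl ler_pM2r ?mulr_gt0 // ler_nat.
  exact: card_first_k_None.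
have -> : 2 / (2 ^ n)%:R = (2 ^ n)%:R * (2 * niso1) / (nvec * niso1).
  have pow_gt0 : 0 < (2 ^ n)%:R :> rat by rewrite ltr0n expn_gt0.
  rewrite card_mx card_Fp // mul1n expnD natrM; field.
  by rewrite !lt0r_neq0.
by apply: ler_wpM2r bad_sum; rewrite invr_ge0 mulr_ge0 ?ler0n.
Qed.

Lemma tv_dist_le : tv_dist src tgt <= 2 / (2 ^ n)%:R.
Proof.
have approx_bound : \sum_W `|src W - approx W| <= 2 / (2 ^ n)%:R.
  by apply: le_trans (sum_hits_error); apply: ler_sum => W _; exact: src_dist_approx.
have := sum_dist_le_scaled src_dist_sum1 tgt_dist_sum1 tgt_dist_ge0 approx_tgt.
rewrite /tv_dist; lra.
Qed.

End TotalVariation.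

Section Witness.
Variable m : nat.
Local Notation n := m.+1.

Definition e_tail : 'M['F_2]_(m, n + n) := \matrix_i e_ (lift ord0 i).

Lemma e_tail_free : row_free e_tail.
Proof.
apply/row_freeP; exists e_tail^T; apply/matrixP => i i'; rewrite !mxE.
rewrite (bigD1 (lshift n (lift ord0 i))) //= big1 => [|j hj]; rewrite !mxE.
  by rewrite !eqxx mul1r addr0 eq_lshift (inj_eq lift_inj) eq_sym.
by rewrite (negbTE hj) andbF mul0r.
Qed.

Lemma sub_e_tail (v : vec n) : (v <= e_tail)%MS ->
  (forall i, v 0 (rshift n i) = 0) /\ v 0 (lshift n ord0) = 0.
Proof.
case/submxP => a ->; split => [i|]; rewrite mxE big1 // => j _; rewrite !mxE.
  by rewrite eq_rlshift andbF mulr0.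
by rewrite eq_lshift (negbTE (neq_lift _ _)) andbF mulr0.
Qed.

Lemma iso_subspaces_f1_gt0 : (0 < #|iso_subspaces_f1 n|)%N.
Proof.
apply/card_gt0P; exists (span_set e_tail).
rewrite (mem_iso_subspaces_f1 (z0 := ord0) erefl e_tail_free); apply/andP; split.
  apply/isotropic_spanP => u v /sub_e_tail[u_b _] /sub_e_tail[v_b _].
  by rewrite /sympl big1 // => i _; rewrite u_b v_b !mulr0 addr0.
apply/orthP => u /sub_e_tail[_ u_a0].
by rewrite /f_ sympl_delta swap_half_rshift.
Qed.

End Witness.

Lemma exp2_dominates_poly c : exists N, forall n, (N <= n)%N -> (2 * n ^ c <= 2 ^ n)%N.
Proof.
have pow_mono a b : (a <= b)%N -> (a ^ c <= b ^ c)%N.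
  by case: c => // c' ab; rewrite leq_exp2r.
pose K := (2 * c.+1 ^ c)%N; exists (K * c.+1)%N => n n_ge.
pose k := (n %/ c.+1)%N.
have n_lt : (n < k.+1 * c.+1)%N := ltn_ceil n (ltn0Sn c).
have K_le : (K <= k)%N by rewrite /k leq_divRL.
have k1_le : (k.+1 <= 2 ^ k)%N := ltn_expl k (ltnSn 1).
have K_le2 : (K <= 2 ^ k)%N by apply: leq_trans (ltnW (ltn_expl K (ltnSn 1))) _;
  apply: leq_pexp2l.
apply: leq_trans (_ : K * k.+1 ^ c <= _)%N.
  by rewrite /K -mulnA -expnMn leq_mul2l pow_mono // mulnC ltnW.
apply: leq_trans (leq_mul K_le2 (pow_mono _ _ k1_le)) _.
by rewrite -expnM -expnD leq_exp2l // addnC -mulnSr leq_trunc_div.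
Qed.

Lemma negligible_exp2 : negligible (fun n => 2 / (2 ^ n)%:R).
Proof.
move=> c; have [N dom] := exp2_dominates_poly c; exists (maxn N 1) => n.
rewrite geq_max => /andP[N_le n_gt0].
have pow2_gt0 : 0 < (2 ^ n)%:R :> rat by rewrite ltr0n expn_gt0.
have powc_gt0 : 0 < (n ^ c)%:R :> rat by rewrite ltr0n expn_gt0 n_gt0.
rewrite -natrX ler_pdivrMr // mulrC ler_pdivlMr //.
by rewrite -natrM ler_nat dom.
Qed.

Theorem lemma4p3 :
  (forall (n : nat), (2 <= n)%N -> forall (r v w : vec n),
      sympl (act (Cmat r) v) (act (Cmat r) w) = sympl v w) /\
  (exists eps : nat -> rat, negligible eps /\
     forall (n : nat) (hn : (2 <= n)%N),
       tv_dist (@src_dist n) (@tgt_dist n)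
         <= eps n).
Proof.
split=> [n _ r v w|]; first exact: Cmat_sympl.
exists (fun n => 2 / (2 ^ n)%:R); split=> [|[//|m] _]; first exact: negligible_exp2.
exact: (tv_dist_le (z0 := ord0) erefl (iso_subspaces_f1_gt0 m)).
Qed.
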